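(* Let $\Sigma,\Delta$ be alphabets and $\varphi:\Delta\to2^{\Sigma^*}$ a regular language substitution such that $\varepsilon\in\varphi(\delta)$ for all $\delta\in\Delta$. Then for each $w\in\Delta^+$ and each $v\in S(\varphi(w))$ there exists $\delta\in\Delta$ such that $v\in S(\varphi(\delta))$.
   Context: A regular language substitution is a map $\varphi:\Delta\to2^{\Sigma^*}$ with each $\varphi(\delta)$ regular, extended to words by $\varphi(\delta\cdot w)=\varphi(\delta)\cdot\varphi(w)$. For a language $L\subseteq\Sigma^*$, the set of shortest nonempty words is $S(L)=\{w\in L\setminus\{\varepsilon\}\mid \text{there is no } w'\in L\setminus\{\varepsilon\} \text{ with } |w'|<|w|\}$. *)

From mathcomp Require Import all_boot.
Set Implicit Arguments. Unset Strict Implicit. Unset Printing Implicit Defensive.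

Definition lang (Sigma : finType) := seq Sigma -> Prop.

Inductive regex (Sigma : finType) : Type :=
| Re_void : regex Sigma
| Re_eps : regex Sigma
| Re_char : Sigma -> regex Sigma
| Re_plus : regex Sigma -> regex Sigma -> regex Sigma
| Re_conc : regex Sigma -> regex Sigma -> regex Sigma
| Re_star : regex Sigma -> regex Sigma.

Definition conc (Sigma : finType) (L1 L2 : lang Sigma) : lang Sigma :=
  fun v => exists v1 v2, v = v1 ++ v2 /\ L1 v1 /\ L2 v2.

Inductive star (Sigma : finType) (L : lang Sigma) : lang Sigma :=
| star_nil : star L [::]
| star_cons : forall v1 v2, L v1 -> star L v2 -> star L (v1 ++ v2).

Fixpoint re_lang (Sigma : finType) (r : regex Sigma) : lang Sigma :=
  match r with
  | Re_void => fun _ => False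
  | Re_eps => fun v => v = [::]
  | Re_char a => fun v => v = [:: a]
  | Re_plus r1 r2 => fun v => re_lang r1 v \/ re_lang r2 v
  | Re_conc r1 r2 => conc (re_lang r1) (re_lang r2)
  | Re_star r1 => star (re_lang r1)
  end.

Definition regular (Sigma : finType) (L : lang Sigma) : Prop :=
  exists r : regex Sigma, forall v, L v <-> re_lang r v.

Fixpoint subst_word (Sigma Delta : finType) (phi : Delta -> lang Sigma)
  (w : seq Delta) : lang Sigma :=
  match w with
  | [::] => fun v => v = [::]
  | d :: w' => conc (phi d) (subst_word phi w')
  end.

Definition shortest (Sigma : finType) (L : lang Sigma) : lang Sigma :=
  fun v => L v /\ v <> [::] /\
    ~ (exists v', L v' /\ v' <> [::] /\ size v' < size v).

From mathcomp Require Import all_boot.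

Set Implicit Arguments.
Unset Strict Implicit.
Unset Printing Implicit Defensive.

(* Since every letter may be erased, phi(d) is contained in phi(w) for each
   letter d of w.  A nonempty word of phi(w) contains, as a factor, a nonempty
   word of some phi(d) with d in w; for a shortest v that factor cannot be
   shorter than v, so it is v itself, and v is shortest in phi(d) because
   phi(d) is a sublanguage of phi(w). *)

Section ErasableSubstitution.

Variables (Sigma Delta : finType) (phi : Delta -> lang Sigma).
Implicit Types (d : Delta).

Lemma subst_word_infix (w : seq Delta) (v : seq Sigma) :
  subst_word phi w v -> v <> [::] ->
  exists2 d, d \in w & exists2 u, phi d u /\ u <> [::] & infix u v.
Proof.
elim: w v => [|d w IHw] v /=; first by move=> ->.
move=> [[|x v1] [v2 [-> [phi_v1 phiw_v2]]]] v_neq0.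
  have [d' d'w [u [phi_u u_neq0] u_inf]] := IHw v2 phiw_v2 v_neq0.
  by exists d'; [rewrite in_cons d'w orbT | exists u].
by exists d; [rewrite mem_head | exists (x :: v1); last exact: prefix_infix].
Qed.

Hypothesis phi_nil : forall d, phi d [::].

Lemma subst_word_nil (w : seq Delta) : subst_word phi w [::].
Proof. by elim: w => [|d w IHw] //=; exists [::], [::]. Qed.

Lemma subst_word_letter (w : seq Delta) (d : Delta) (u : seq Sigma) :
  d \in w -> phi d u -> subst_word phi w u.
Proof.
elim: w => [//|d' w IHw]; rewrite in_cons => /orP[/eqP <- | dw] phi_u /=.
  by exists u, [::]; rewrite cats0; split; [|split; last exact: subst_word_nil].
by exists [::], u; split; [|split; last exact: IHw].
Qed.

End ErasableSubstitution.

Lemma shortest_sub (Sigma : finType) (L1 L2 : lang Sigma) (v : seq Sigma) :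
  (forall u, L1 u -> L2 u) -> L1 v -> shortest L2 v -> shortest L1 v.
Proof.
move=> L12 L1v [_ [v_neq0 v_min]]; split=> //; split=> // -[u [L1u [u_neq0 lt_uv]]].
by apply: v_min; exists u; split; [exact: L12|].
Qed.

Lemma infix_size_eq (T : eqType) (u v : seq T) :
  infix u v -> size v <= size u -> u = v.
Proof.
move=> /infixW uv le_vu; apply/eqP.
by rewrite -(size_subseq_leqif uv) eqn_leq le_vu size_subseq.
Qed.

Theorem lemma1 (Sigma Delta : finType) (phi : Delta -> lang Sigma) :
  (forall d, regular (phi d)) ->
  (forall d, phi d [::]) ->
  forall (w : seq Delta), w <> [::] ->
  forall v, shortest (subst_word phi w) v ->
  exists d : Delta, shortest (phi d) v.
Proof.
move=> _ phi_nil w _ v v_short; have [phiw_v [v_neq0 v_min]] := v_short.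
have [d dw [u [phi_u u_neq0] u_inf]] := subst_word_infix phiw_v v_neq0.
have phi_sub := subst_word_letter phi_nil dw.
have le_vu : size v <= size u.
  rewrite leqNgt; apply/negP => lt_uv.
  by apply: v_min; exists u; split; [exact: phi_sub|].
have u_eq_v : u = v := infix_size_eq u_inf le_vu.
by exists d; apply: shortest_sub phi_sub _ v_short; rewrite -u_eq_v.
Qed.
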